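(* There is an absolute constant $\kappa>0$ such that the following holds. Let $X,Y,Z$ be finite sets with $|Z|\ge 2$ and $f:X\times Y\to Z$ with $\mathrm{mdisc}(f)\le 2^{-d}$. Let $l,r\ge 1$ and let $O=\{(i_1,j_1),\dots,(i_k,j_k)\}$ be a set of $k$ distinct pairs with $i_t\in\{1,\dots,l\}$, $j_t\in\{1,\dots,r\}$, where $k\le d/5$. Define $f_O:X^l\times Y^r\to Z^k$ by $f_O(x_1,\dots,x_l,y_1,\dots,y_r)=(f(x_{i_1},y_{j_1}),\dots,f(x_{i_k},y_{j_k}))$. Then $\mathrm{mdisc}(f_O)\le \kappa\, 2^{-d/4}$, where the multicolor discrepancy of $f_O$ is taken with color set $Z^k$ and the uniform distribution on $X^l\times Y^r$.
   Context: Rectangles are product sets $A\times B$ in the relevant product domain; $\mu$ is the uniform distribution on that domain. For $M:U\times V\to W$ with $W$ finite, $\mathrm{mdisc}(M)=\max_R\max_{w\in W}|\mu(R\cap M^{-1}(w))-\mu(R)/|W||$, maximum over all rectangles $R\subseteq U\times V$. *)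

From HB Require Import structures.
From mathcomp Require Import all_boot all_order all_algebra.
From mathcomp Require Import all_classical all_reals all_analysis.
From mathcomp Require Import Rstruct.
From Stdlib Require Import Rdefinitions.
Set Implicit Arguments. Unset Strict Implicit. Unset Printing Implicit Defensive.
Import Order.TTheory GRing.Theory Num.Theory.
Local Open Scope ring_scope.

Definition rect_disc (U V W : finType) (M : U -> V -> W)
  (A : {set U}) (B : {set V}) (w : W) : R :=
  `| (#|[set p : U * V | (p.1 \in A) && (p.2 \in B) && (M p.1 p.2 == w)]|%:R
        / (#|U| * #|V|)%:R)
     - ((#|A| * #|B|)%:R / (#|U| * #|V|)%:R) / #|W|%:R |.

Definition mdisc (U V W : finType) (M : U -> V -> W) : R :=
  \big[Num.max/0]_(A : {set U}) \big[Num.max/0]_(B : {set V})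
     \big[Num.max/0]_(w : W) rect_disc M A B w.

(* f_O : X^l x Y^r -> Z^k, O given as an injective enumeration t |-> (i_t, j_t) *)
Definition fO (X Y Z : finType) (l r k : nat) (f : X -> Y -> Z)
  (O : {ffun 'I_k -> 'I_l * 'I_r})
  (x : {ffun 'I_l -> X}) (y : {ffun 'I_r -> Y}) : {ffun 'I_k -> Z} :=
  [ffun t => f (x (O t).1) (y (O t).2)].

From HB Require Import structures.
From mathcomp Require Import all_boot all_order all_algebra.
From mathcomp Require Import all_classical all_reals all_analysis.
From mathcomp Require Import Rstruct.
From Stdlib Require Import Rdefinitions.
From mathcomp Require Import ring lra.
Import Order.TTheory GRing.Theory Num.Theory.
Local Open Scope ring_scope.

(* A hybrid argument.  For a rectangle A x B of X^l x Y^r and a colour w, let C_n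
   count the pairs of A x B whose first n output coordinates agree with w.  Once
   every input coordinate except x_{i_n} and y_{j_n} is fixed, the constraints of
   C_n split into constraints on x_{i_n} alone (earlier pairs in another column)
   and on y_{j_n} alone (earlier pairs in column j_n, hence in another row since O
   is injective), so the consistent values form a rectangle of X x Y.  Averaging
   over these slices, C_{n+1} differs from C_n / |Z| by at most
   |X^l| |Y^r| mdisc f, and telescoping gives mdisc f_O <= k mdisc f <= k 2^-d.
   As k <= 2^k <= 2^(3d/4), the theorem holds with kappa = 1, even without the
   hypotheses |Z| >= 2 and l, r >= 1. *)

Section FfunUpdate.
Variables (I T : finType).
Implicit Types (u : {ffun I -> T}) (i : I) (x : T).

Definition ffun_upd u i x : {ffun I -> T} := [ffun i' => if i' == i then x else u i'].

Lemma ffun_upd_id u i x : ffun_upd u i x i = x.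
Proof. by rewrite ffunE eqxx. Qed.

Lemma ffun_upd_ne u i x i' : i' != i -> ffun_upd u i x i' = u i'.
Proof. by rewrite ffunE => /negbTE ->. Qed.

Lemma ffun_updK u i x : ffun_upd (ffun_upd u i x) i (u i) = u.
Proof. by apply/ffunP => i'; rewrite !ffunE; case: eqP => [->|]. Qed.

Lemma sum_ffun_upd (V : nmodType) i (F : {ffun I -> T} -> V) :
  \sum_u \sum_x F (ffun_upd u i x) = (\sum_u F u) *+ #|T|.
Proof.
rewrite pair_big /=.
pose g (p : {ffun I -> T} * T) := (ffun_upd p.1 i p.2, p.1 i).
have gK : involutive g by case=> u x; rewrite /g /= ffun_updK ffun_upd_id.
rewrite (reindex_inj (inv_inj gK)) /=.
rewrite -(pair_big xpredT xpredT (fun u x => F (ffun_upd (ffun_upd u i x) i (u i)))) /=.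
rewrite -sumrMnl.
by apply: eq_bigr => u _; under eq_bigr do rewrite ffun_updK; rewrite sumr_const.
Qed.

End FfunUpdate.
Arguments ffun_upd {I T} u i x.
Arguments sum_ffun_upd {I T V} i F.

Lemma sum_ffun_upd2 {I J S T : finType} {V : nmodType} (i : I) (j : J)
    (F : {ffun I -> S} -> {ffun J -> T} -> V) :
  \sum_u \sum_v \sum_x \sum_y F (ffun_upd u i x) (ffun_upd v j y) =
  (\sum_u \sum_v F u v) *+ (#|S| * #|T|).
Proof.
under eq_bigr do rewrite exchange_big /=.
under eq_bigr do under eq_bigr do rewrite (sum_ffun_upd j (F _)).
rewrite mulrnA.
have := sum_ffun_upd i (fun u => \sum_v F u v); rewrite /= => <-.
by rewrite -sumrMnl; apply: eq_bigr => u _; rewrite sumrMnl.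
Qed.

Lemma sum_sum_const (U V : finType) (K : pzSemiRingType) (c : K) :
  \sum_(u : U) \sum_(v : V) c = (#|U| * #|V|)%:R * c.
Proof. by rewrite !sumr_const -mulrnA mulr_natl mulnC. Qed.

Lemma natr_card_sum (T : finType) (V : pzSemiRingType) (A : {pred T}) :
  (#|A|%:R : V) = \sum_i (i \in A)%:R.
Proof. by rewrite -sum1_card natr_sum big_mkcond; apply: eq_bigr => i _; case: (i \in A). Qed.

Section Discrepancy.
Variables (U V W : finType) (M : U -> V -> W).
Implicit Types (A : {set U}) (B : {set V}) (w : W).

Definition rect_hits A B w : nat :=
  #|[set p : U * V | (p.1 \in A) && (p.2 \in B) && (M p.1 p.2 == w)]|.

Lemma sum_rect_centered (K : comPzRingType) A B w (z : K) :
  \sum_x \sum_y ((x \in A) && (y \in B))%:R * ((M x y == w)%:R - z) =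
  (rect_hits A B w)%:R - (#|A| * #|B|)%:R * z.
Proof.
rewrite /rect_hits natrM !natr_card_sum big_distrlr mulr_suml.
under [X in _ - X]eq_bigr do rewrite mulr_suml.
rewrite !pair_big /= -sumrB; apply: eq_bigr => p _; rewrite inE.
by case: (p.1 \in A); case: (p.2 \in B); case: (M p.1 p.2 == w); rewrite /=; ring.
Qed.

Lemma rect_discE A B w :
  rect_disc M A B w =
  `|(rect_hits A B w)%:R - (#|A| * #|B|)%:R / #|W|%:R| / (#|U| * #|V|)%:R.
Proof.
by rewrite /rect_disc -/(rect_hits A B w) mulrAC -mulrBl normrM normfV normr_nat.
Qed.

Lemma mdisc_ge0 : 0 <= mdisc M.
Proof. exact: bigmax_ge_id. Qed.

Lemma rect_disc_le_mdisc A B w : rect_disc M A B w <= mdisc M.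
Proof.
apply/bigmax_geP; right; exists A => //.
apply/bigmax_geP; right; exists B => //.
by apply/bigmax_geP; right; exists w.
Qed.

Lemma mdisc_le (c : R) :
  0 <= c -> (forall A B w, rect_disc M A B w <= c) -> mdisc M <= c.
Proof.
move=> c0 le_c; apply: bigmax_le => // A _.
by apply: bigmax_le => // B _; apply: bigmax_le => // w _.
Qed.

Lemma rect_hits_dev_le A B w : (0 < #|U| * #|V|)%nat ->
  `|(rect_hits A B w)%:R - (#|A| * #|B|)%:R / #|W|%:R| <= (#|U| * #|V|)%:R * mdisc M.
Proof.
move=> UV0; have N0 : (0 : R) < (#|U| * #|V|)%:R by rewrite ltr0n.
by rewrite [_ * mdisc M]mulrC -(ler_pdivrMr _ _ N0) -rect_discE rect_disc_le_mdisc.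
Qed.

End Discrepancy.
Arguments rect_hits {U V W} M A B w.

Lemma forall_implyb_split (T : finType) (P c Q : pred T) :
  [forall s, P s ==> Q s] =
  [forall s, P s && ~~ c s ==> Q s] && [forall s, P s && c s ==> Q s].
Proof.
apply/forallP/andP => [PQ | [/forallP PcQ /forallP PncQ] s].
  by split; apply/forallP => s; apply/implyP => /andP [/(implyP (PQ s))].
apply/implyP => Ps; case: (boolP (c s)) => cs.
  by apply: (implyP (PncQ s)); rewrite Ps cs.
by apply: (implyP (PcQ s)); rewrite Ps cs.
Qed.

Section Hybrid.
Variables (X Y Z : finType) (f : X -> Y -> Z) (l r k : nat).
Variables (O : {ffun 'I_k -> 'I_l * 'I_r}) (w : {ffun 'I_k -> Z}).
Hypothesis injO : injective O.
Variables (A : {set {ffun 'I_l -> X}}) (B : {set {ffun 'I_r -> Y}}).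
Implicit Types (u : {ffun 'I_l -> X}) (v : {ffun 'I_r -> Y}) (s t : 'I_k).

Local Notation N := ((#|{ffun 'I_l -> X}| * #|{ffun 'I_r -> Y}|)%:R : R).

Definition agrees_at s u v := f (u (O s).1) (v (O s).2) == w s.

Lemma agrees_at_upd_row s u v i x :
  (O s).1 != i -> agrees_at s (ffun_upd u i x) v = agrees_at s u v.
Proof. by move=> si; rewrite /agrees_at ffun_upd_ne. Qed.

Lemma agrees_at_upd_col s u v j y :
  (O s).2 != j -> agrees_at s u (ffun_upd v j y) = agrees_at s u v.
Proof. by move=> sj; rewrite /agrees_at ffun_upd_ne. Qed.

Definition hybrid (n : nat) u v :=
  [&& u \in A, v \in B & [forall s : 'I_k, (s < n)%nat ==> agrees_at s u v]].

Definition hybrid_count (n : nat) : R := \sum_u \sum_v (hybrid n u v)%:R.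

Lemma hybridS t u v : hybrid t.+1 u v = hybrid t u v && agrees_at t u v.
Proof.
rewrite /hybrid -!andbA; congr [&& _, _ & _].
apply/forallP/andP => [agr | [/forallP agr agr_t] s].
  split; last exact: (implyP (agr t)).
  by apply/forallP => s; apply/implyP => st; apply: (implyP (agr s)); apply: ltnW.
apply/implyP; rewrite ltnS leq_eqVlt => /orP [/eqP st|st].
  by rewrite (val_inj st).
exact: (implyP (agr s)).
Qed.

Lemma hybrid_countS t :
  hybrid_count t.+1 - hybrid_count t / #|Z|%:R =
  \sum_u \sum_v (hybrid t u v)%:R * ((agrees_at t u v)%:R - #|Z|%:R^-1).
Proof.
rewrite /hybrid_count mulr_suml -sumrB; apply: eq_bigr => u _.
rewrite mulr_suml -sumrB; apply: eq_bigr => v _.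
by rewrite hybridS -mulnb natrM mulrBr.
Qed.

Definition row_slice t u v : {set X} :=
  [set x | (ffun_upd u (O t).1 x \in A) &&
     [forall s : 'I_k, (s < t)%nat && ((O s).2 != (O t).2) ==>
                agrees_at s (ffun_upd u (O t).1 x) v]].

Definition col_slice t u v : {set Y} :=
  [set y | (ffun_upd v (O t).2 y \in B) &&
     [forall s : 'I_k, (s < t)%nat && ((O s).2 == (O t).2) ==>
                agrees_at s u (ffun_upd v (O t).2 y)]].

Lemma row_neq_of_col_eq s t : (s < t)%nat -> (O s).2 = (O t).2 -> (O s).1 != (O t).1.
Proof.
move=> st sj; apply/eqP => si.
have /injO st_eq : O s = O t by apply: injective_projections.
by rewrite st_eq ltnn in st.
Qed.

Lemma hybrid_upd t u v x y :
  hybrid t (ffun_upd u (O t).1 x) (ffun_upd v (O t).2 y) =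
  (x \in row_slice t u v) && (y \in col_slice t u v).
Proof.
rewrite /hybrid !inE (forall_implyb_split _ _ (fun s => (O s).2 == (O t).2)).
rewrite andbA andbACA; congr ((_ && _) && (_ && _)); apply: eq_forallb => s.
  by case/boolP: (_ && _) => //= /andP [_ sj]; rewrite agrees_at_upd_col.
case/boolP: (_ && _) => //= /andP [st /eqP sj].
by rewrite agrees_at_upd_row // row_neq_of_col_eq.
Qed.

Lemma slice_dev_le t u v :
  `|\sum_x \sum_y (hybrid t (ffun_upd u (O t).1 x) (ffun_upd v (O t).2 y))%:R *
      ((agrees_at t (ffun_upd u (O t).1 x) (ffun_upd v (O t).2 y))%:R - #|Z|%:R^-1)|
  <= (#|X| * #|Y|)%:R * mdisc f.
Proof.
have XY0 : (0 < #|X| * #|Y|)%nat.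
  by rewrite muln_gt0; apply/andP; split; apply/card_gt0P;
    [exists (u (O t).1) | exists (v (O t).2)].
under eq_bigr do under eq_bigr do rewrite hybrid_upd /agrees_at !ffun_upd_id.
by rewrite sum_rect_centered rect_hits_dev_le.
Qed.

Lemma hybrid_step_le t :
  `|hybrid_count t.+1 - hybrid_count t / #|Z|%:R| <= N * mdisc f.
Proof.
have m0 : 0 <= N * mdisc f by rewrite mulr_ge0 ?mdisc_ge0.
rewrite hybrid_countS.
set H := fun u v => (hybrid t u v)%:R * ((agrees_at t u v)%:R - #|Z|%:R^-1) : R.
case: (pickP (fun _ : {ffun 'I_l -> X} => true)) => [u0 _ | noX]; last first.
  by rewrite big_pred0 ?normr0.
case: (pickP (fun _ : {ffun 'I_r -> Y} => true)) => [v0 _ | noY]; last first.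
  by rewrite big1 ?normr0 // => u _; rewrite big_pred0.
have XY0 : (0 : R) < (#|X| * #|Y|)%:R.
  by rewrite ltr0n muln_gt0; apply/andP; split; apply/card_gt0P;
    [exists (u0 (O t).1) | exists (v0 (O t).2)].
rewrite -(ler_pM2l XY0) -[X in X * `|_|]normr_nat -normrM mulr_natl.
rewrite -(sum_ffun_upd2 (O t).1 (O t).2 H).
have -> : (#|X| * #|Y|)%:R * (N * mdisc f) =
          \sum_(u : {ffun 'I_l -> X}) \sum_(v : {ffun 'I_r -> Y}) (#|X| * #|Y|)%:R * mdisc f.
  by rewrite sum_sum_const mulrCA.
apply: le_trans (ler_norm_sum _ _ _) _; apply: ler_sum => u _.
apply: le_trans (ler_norm_sum _ _ _) _; apply: ler_sum => v _.
exact: slice_dev_le.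
Qed.

Lemma hybrid_telescope :
  `|hybrid_count k - hybrid_count 0 / #|Z|%:R ^+ k| <= k%:R * (N * mdisc f).
Proof.
pose F n := hybrid_count n / #|Z|%:R ^+ (k - n).
have term_le t : `|F t.+1 - F t| <= N * mdisc f.
  have Zk1 : (1 : R) <= #|Z|%:R ^+ (k - t.+1).
    by rewrite exprn_ege1 // ler1n; apply/card_gt0P; exists (w t).
  rewrite /F -(subnSK (ltn_ord t)) exprS invfM mulrA -mulrBl normrM normfV.
  rewrite normrX normr_nat ler_pdivrMr ?(lt_le_trans ltr01 Zk1) //.
  by apply: le_trans (hybrid_step_le t) _; rewrite ler_peMr ?mulr_ge0 ?mdisc_ge0.
have -> : hybrid_count k - hybrid_count 0 / #|Z|%:R ^+ k = \sum_(0 <= n < k) (F n.+1 - F n).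
  by rewrite telescope_sumr // /F subnn expr0 divr1 subn0.
rewrite big_mkord; apply: le_trans (ler_norm_sum _ _ _) _.
apply: le_trans (ler_sum _ (fun t _ => term_le t)) _.
by rewrite sumr_const card_ord [in leRHS]mulr_natl.
Qed.

Lemma hybrid_count_last : hybrid_count k = (rect_hits (fO f O) A B w)%:R.
Proof.
rewrite /hybrid_count pair_big /rect_hits natr_card_sum; apply: eq_bigr => p _.
rewrite inE /hybrid -andbA; congr [&& _, _ & _]%:R.
apply/forallP/eqP => [agr | fOw s]; last by rewrite /agrees_at -fOw ffunE eqxx implybT.
by apply/ffunP => s; rewrite ffunE; apply/eqP/(implyP (agr s)).
Qed.

Lemma hybrid_count0 : hybrid_count 0 = (#|A| * #|B|)%:R.
Proof.
rewrite /hybrid_count natrM !natr_card_sum big_distrlr; apply: eq_bigr => u _.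
apply: eq_bigr => v _; rewrite /= -natrM mulnb /hybrid andbA.
have -> : [forall s : 'I_k, (s < 0)%nat ==> agrees_at s u v] by apply/forallP.
by rewrite andbT.
Qed.

Lemma rect_disc_fO_le : rect_disc (fO f O) A B w <= k%:R * mdisc f.
Proof.
rewrite rect_discE -hybrid_count_last -hybrid_count0 card_ffun card_ord natrX.
have [->|N0] := eqVneq N 0; first by rewrite invr0 mulr0 mulr_ge0 ?mdisc_ge0.
rewrite ler_pdivrMr; last by rewrite lt_def N0 ler0n.
by apply: le_trans hybrid_telescope _; rewrite mulrAC -mulrA.
Qed.

End Hybrid.

Lemma mdisc_fO_le {X Y Z : finType} (f : X -> Y -> Z) {l r k : nat}
    {O : {ffun 'I_k -> 'I_l * 'I_r}} :
  injective O -> mdisc (fO f O) <= k%:R * mdisc f.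
Proof.
move=> injO; apply: mdisc_le => [|A B w]; first by rewrite mulr_ge0 ?mdisc_ge0.
exact: rect_disc_fO_le.
Qed.

Lemma natr_le_powR2 (n : nat) : (n%:R : R) <= 2 `^ n%:R.
Proof. by rewrite powR_mulrn // -natrX ler_nat ltnW // ltn_expl. Qed.

Theorem mainTheorem5 :
  exists kappa : R, 0 < kappa /\
  forall (X Y Z : finType) (f : X -> Y -> Z) (d : R) (l r k : nat)
         (O : {ffun 'I_k -> 'I_l * 'I_r}),
    leq 2 #|Z| ->
    mdisc f <= 2 `^ (- d) ->
    leq 1 l -> leq 1 r ->
    injective O ->
    k%:R <= d / 5 ->
    mdisc (fO f O) <= kappa * 2 `^ (- d / 4).
Proof.
exists 1; split => // X Y Z f d l r k O _ disc_f _ _ injO kd.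
have k_le : k%:R <= 2 `^ (3 * d / 4).
  apply: le_trans (natr_le_powR2 k) _.
  by apply: ler_powR; [rewrite ler1n | have := ler0n R k; lra].
rewrite mul1r; apply: le_trans (mdisc_fO_le f injO) _.
apply: le_trans (ler_wpM2l (ler0n R k) disc_f) _.
apply: le_trans (ler_wpM2r (powR_ge0 _ _) k_le) _.
rewrite -powRD; last by apply/implyP; rewrite pnatr_eq0.
by have -> : 3 * d / 4 + - d = - d / 4 by field.
Qed.
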